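(* Let $X$ be a shift space over $\mathcal{A}$, let $\sigma:\mathcal{A}^*\to\mathcal{B}^*$ be an injective and strongly left proper morphism with first letter $\ell$, let $Y$ be the image of $X$ under $\sigma$ and let $u$ be a non-empty word in $\mathcal{L}(Y)$. If $\ell$ does not occur in $u$, then there exists $b\in\mathcal{A}$ such that $u$ is a non-prefix factor of $\sigma(b)$. Otherwise, there is a unique triple $(s,v,p)\in\mathcal{B}^*\times\mathcal{L}(X)\times\mathcal{B}^*$ for which there exists a pair $(a,b)\in E_X(v)$ such that $u=s\sigma(v)p$, $s$ is a proper suffix of $\sigma(a)$ and $p$ is a non-empty prefix of $\sigma(b)$. Moreover, in the case where $\ell$ occurs in $u$, $$E_Y(u)=\{(a',b')\in\mathcal{B}\times\mathcal{B}\mid \exists (a,b)\in E_X(v):\ \sigma(a)\in\mathcal{B}^*a's\ \wedge\ \sigma(b)\ell\in pb'\mathcal{B}^*\}.$$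
   Context: A shift space over a finite alphabet $\mathcal{A}$ is a closed shift-invariant $X\subseteq\mathcal{A}^{\mathbb{Z}}$ in which all letters of $\mathcal{A}$ occur; $\mathcal{L}(X)$ is its set of finite factors (including the empty word). For $w\in\mathcal{L}(X)$, $E_X(w)=\{(a,b)\in\mathcal{A}\times\mathcal{A}: awb\in\mathcal{L}(X)\}$. A morphism $\sigma:\mathcal{A}^*\to\mathcal{B}^*$ is a non-erasing monoid morphism; it is strongly left proper with first letter $\ell\in\mathcal{B}$ if for every $a\in\mathcal{A}$, $\sigma(a)$ starts with $\ell$ and $\ell$ occurs exactly once in $\sigma(a)$. The image of $X$ under $\sigma$ is $Y=\{S^k\sigma(x): x\in X, 0\le k<|\sigma(x_0)|\}$ where $S$ is the shift map and $\sigma$ is extended to bi-infinite words by concatenation (with $\sigma(x_0)$ starting at index $0$). *)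

From mathcomp Require Import all_boot all_order all_algebra.
Set Implicit Arguments. Unset Strict Implicit. Unset Printing Implicit Defensive.
Import GRing.Theory Num.Theory.
Local Open Scope ring_scope.

Definition window (A : Type) (x : int -> A) (i : int) (n : nat) : seq A :=
  [seq x (i + k%:Z) | k <- iota 0 n].

Definition shift (A : Type) (x : int -> A) : int -> A := fun i => x (i + 1).

(* X is closed in the product topology of A^Z (A discrete): any point all of
   whose central cylinders meet X belongs to X *)
Definition closed_set (A : Type) (X : (int -> A) -> Prop) : Prop :=
  forall x : int -> A,
    (forall n : nat, exists y, X y /\
        forall j : int, - n%:Z <= j <= n%:Z -> y j = x j) -> X x.

Definition shift_invariant (A : Type) (X : (int -> A) -> Prop) : Prop :=
  (forall x, X x -> X (shift x)) /\
  (forall y, X y -> exists x, X x /\ shift x = y).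

Definition shift_space (A : Type) (X : (int -> A) -> Prop) : Prop :=
  [/\ closed_set X, shift_invariant X &
      forall a : A, exists x, X x /\ exists i, x i = a].

Definition lang (A : Type) (X : (int -> A) -> Prop) (w : seq A) : Prop :=
  w = [::] \/ exists x, X x /\ exists i, window x i (size w) = w.

Definition ext_set (A : Type) (X : (int -> A) -> Prop) (w : seq A) (a b : A) : Prop :=
  lang X (a :: w ++ [:: b]).

Definition morph (A B : Type) (sigma : A -> seq B) (w : seq A) : seq B :=
  flatten (map sigma w).

Definition non_erasing (A B : Type) (sigma : A -> seq B) : Prop :=
  forall a, sigma a <> [::].

Definition strongly_left_proper (A B : eqType) (sigma : A -> seq B) (l : B) : Prop :=
  forall a, (exists t, sigma a = l :: t) /\ count_mem l (sigma a) = 1%N.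

(* z is the bi-infinite word sigma(x), with sigma(x_0) starting at index 0:
   for every n, sigma(x_{-n} ... x_{n-1}) occurs in z starting at index
   -|sigma(x_{-n} ... x_{-1})| *)
Definition sigma_bi (A B : Type) (sigma : A -> seq B) (x : int -> A) (z : int -> B) : Prop :=
  forall n : nat,
    window z (- (size (morph sigma (window x (- n%:Z) n)))%:Z)
             (size (morph sigma (window x (- n%:Z) (n + n))))
    = morph sigma (window x (- n%:Z) (n + n)).

(* image of X under sigma: { S^k sigma(x) | x \in X, 0 <= k < |sigma(x_0)| } *)
Definition image_shift (A B : Type) (X : (int -> A) -> Prop) (sigma : A -> seq B)
  (y : int -> B) : Prop :=
  exists x z (k : nat), [/\ X x, sigma_bi sigma x z, (k < size (sigma (x 0)))%N &
                         forall i, y i = z (i + k%:Z)].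

Definition nonprefix_factor (B : Type) (u w : seq B) : Prop :=
  exists s t, s <> [::] /\ w = s ++ u ++ t.

Definition triple_prop (A B : Type) (X : (int -> A) -> Prop) (sigma : A -> seq B)
  (u : seq B) (s : seq B) (v : seq A) (p : seq B) : Prop :=
  lang X v /\
  exists a b, [/\ ext_set X v a b, u = s ++ morph sigma v ++ p,
                  (exists t, t <> [::] /\ sigma a = t ++ s) &
                  (p <> [::] /\ exists r, sigma b = p ++ r)].

From mathcomp Require Import all_boot all_order all_algebra zify.
Set Implicit Arguments. Unset Strict Implicit. Unset Printing Implicit Defensive.
Import Order.TTheory GRing.Theory Num.Theory.
Local Open Scope ring_scope.

(* Each factor u of Y lies in some sigma(x), x in X, which is cut into the blocks
   sigma(x_i).  As l occurs exactly once in every block, at its start, the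
   occurrences of l in u are exactly the block boundaries inside u.  Without
   boundaries u lies strictly inside one block.  Otherwise u = s sigma(v) p, where
   s, the part before the first boundary, is a proper suffix of the block
   sigma(a) before, and p, the part from the last boundary on, is a nonempty
   prefix of the block sigma(b) after; the positions of l force s and p, and
   injectivity of sigma then forces v.  The letter left of u is read in sigma(a),
   and the letter right of u in sigma(b) followed by the l starting the next
   block, which gives the extensions of u. *)

Lemma morph_cat (A B : Type) (sigma : A -> seq B) u v :
  morph sigma (u ++ v) = morph sigma u ++ morph sigma v.
Proof. by rewrite /morph map_cat flatten_cat. Qed.

Lemma morph1 (A B : Type) (sigma : A -> seq B) a : morph sigma [:: a] = sigma a.
Proof. by rewrite /morph /= cats0. Qed.

Lemma size_morph_ge (A B : Type) (sigma : A -> seq B) w :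
  non_erasing sigma -> (size w <= size (morph sigma w))%N.
Proof.
move=> ne; elim: w => //= a w IHw; rewrite size_cat.
by case: (sigma a) (@ne a) => //= b s _; rewrite addSn ltnS (leq_trans IHw) ?leq_addl.
Qed.

Lemma cat_size_inj (T : Type) (s1 s2 t1 t2 : seq T) :
  size s1 = size s2 -> s1 ++ t1 = s2 ++ t2 -> s1 = s2 /\ t1 = t2.
Proof.
move=> e h; split.
  by move: (congr1 (take (size s1)) h); rewrite take_size_cat // e take_size_cat.
by move: (congr1 (drop (size s1)) h); rewrite drop_size_cat // e drop_size_cat.
Qed.

Section Segments.
Variables (T : Type) (z : int -> T).

Lemma size_window i n : size (window z i n) = n.
Proof. by rewrite size_map size_iota. Qed.

Lemma windowS i n : window z i n.+1 = z i :: window z (i + 1) n.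
Proof.
rewrite /window /= addr0 -[1%N]addn0 iotaDl -map_comp.
by congr (_ :: _); apply: eq_map => k /=; rewrite PoszD addrA.
Qed.

Lemma windowD i m n : window z i (m + n) = window z i m ++ window z (i + m%:Z) n.
Proof.
elim: m i => [|m IHm] i; first by rewrite addr0.
by rewrite addSn !windowS IHm -addrA -PoszD add1n.
Qed.

Lemma window1 i : window z i 1 = [:: z i].
Proof. by rewrite windowS. Qed.

(* z_a ... z_(b-1) when a <= b; for b < a it is junk (the window of length |b - a| at a). *)
Definition segment (a b : int) : seq T := window z a (absz (b - a)%R).

Lemma segment_window a n : segment a (a + n%:Z) = window z a n.
Proof. by rewrite /segment (_ : absz (a + n%:Z - a)%R = n) //; lia. Qed.

Lemma size_segment a b : size (segment a b) = absz (b - a)%R.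
Proof. exact: size_window. Qed.

Lemma segment_nil a b : a < b -> segment a b <> [::].
Proof. by move=> ab /(congr1 size); rewrite size_segment /=; lia. Qed.

Lemma segment1 a : segment a (a + 1) = [:: z a].
Proof. by rewrite -window1 -segment_window. Qed.

Lemma segment_cons a b : a < b -> segment a b = z a :: segment (a + 1) b.
Proof.
move=> ab; rewrite /segment (_ : absz (b - a)%R = (absz (b - (a + 1))%R).+1) ?windowS //.
lia.
Qed.

Lemma nth_segment d a b k :
  (k < absz (b - a))%N -> nth d (segment a b) k = z (a + k%:Z).
Proof. by move=> kab; rewrite /segment (nth_map 0%N) ?size_iota // nth_iota. Qed.

Lemma segment_cat a b c :
  a <= b -> b <= c -> segment a c = segment a b ++ segment b c.
Proof.
move=> ab bc; rewrite /segment.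
rewrite (_ : absz (c - a)%R = (absz (b - a)%R + absz (c - b)%R)%N); last by lia.
by rewrite windowD (_ : a + (absz (b - a)%R)%:Z = b) //; lia.
Qed.

End Segments.

Lemma mem_segment (T : eqType) (z : int -> T) a b m :
  a <= m < b -> z m \in segment z a b.
Proof.
move=> /andP[am mb]; apply/mapP; exists (absz (m - a)%R); last by congr z; lia.
by rewrite mem_iota; lia.
Qed.

Lemma segmentP (T : eqType) (z : int -> T) a b y : a <= b ->
  y \in segment z a b -> exists2 m, a <= m < b & z m = y.
Proof.
move=> ab /mapP[k]; rewrite mem_iota add0n => /andP[_ kab] ->.
by exists (a + k%:Z) => //; lia.
Qed.

Section BlockStarts.
Variables (A B : Type) (sigma : A -> seq B) (x : int -> A).

Local Notation len a b := (size (morph sigma (segment x a b))).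

(* The position at which sigma(x_i) starts in sigma(x), sigma(x_0) starting at 0. *)
Definition block_start (i : int) : int :=
  if 0 <= i then (len 0 i)%:Z else - (len i 0)%:Z.

Local Notation pos := block_start.

Lemma len_cat a b c : a <= b -> b <= c -> len a c = (len a b + len b c)%N.
Proof. by move=> ab bc; rewrite (segment_cat _ ab bc) morph_cat size_cat. Qed.

Lemma block_start_ge0 i : 0 <= i -> pos i = (len 0 i)%:Z.
Proof. by rewrite /block_start => ->. Qed.

Lemma block_start_le0 i : i <= 0 -> pos i = - (len i 0)%:Z.
Proof.
rewrite /block_start le_eqVlt => /orP[/eqP-> | i0] //.
by rewrite ifF // leNgt i0.
Qed.

Lemma block_start_segment i j : i <= j -> pos j = pos i + (len i j)%:Z.
Proof.
move=> ij; case: (lerP 0 i) => i0.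
  by rewrite !block_start_ge0 ?(le_trans i0 ij) // (len_cat i0 ij) PoszD.
rewrite (block_start_le0 (ltW i0)); case: (lerP 0 j) => j0.
  by rewrite block_start_ge0 // (len_cat (ltW i0) j0) PoszD addKr.
rewrite (block_start_le0 (ltW j0)) (len_cat ij (ltW j0)).
by rewrite PoszD opprD addrAC addNr add0r.
Qed.

Lemma block_startS i : pos (i + 1) = pos i + (size (sigma (x i)))%:Z.
Proof. by rewrite (@block_start_segment i) ?lerDl // segment1 morph1. Qed.

Lemma block_start_le i j : i <= j -> pos i <= pos j.
Proof. by move=> ij; rewrite (block_start_segment ij) lerDl. Qed.

Hypothesis ne : non_erasing sigma.

Lemma block_start_sub i j : i <= j -> j - i <= pos j - pos i.
Proof.
move=> ij; rewrite (block_start_segment ij) addrAC subrr add0r.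
by have := size_morph_ge (segment x i j) ne; rewrite size_segment; lia.
Qed.

Lemma block_start_lt : {mono pos : i j / i < j}.
Proof.
apply/leW_mono/le_mono => i j ij.
by have := block_start_sub (ltW ij); lia.
Qed.

Lemma block_cover m : exists i, pos i <= m < pos (i + 1).
Proof.
pose i0 := - (absz m)%:Z.
have i0m : pos i0 <= m.
  by have := block_start_sub (i := i0) (j := 0); rewrite /block_start /=; lia.
pose P k := pos (i0 + k%:Z) <= m.
have P0 : P 0%N by rewrite /P addr0.
have Pub k : P k -> (k <= absz (m - pos i0))%N.
  by rewrite /P => Pk; have := block_start_sub (i := i0) (j := i0 + k%:Z); lia.
case: (ex_maxnP (ex_intro P 0%N P0) Pub) => k Pk kmax.
exists (i0 + k%:Z); apply/andP; split=> //; rewrite ltNge; apply/negP => Pk1.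
suff : (k.+1 <= k)%N by rewrite ltnn.
by apply: kmax; rewrite /P -addn1 PoszD addrA.
Qed.

Lemma block_cover_lt m : exists i, pos i < m <= pos (i + 1).
Proof. by have [i /andP[im mi]] := block_cover (m - 1); exists i; lia. Qed.

Lemma block_cover_uniq m i j :
  pos i <= m < pos (i + 1) -> pos j <= m < pos (j + 1) -> i = j.
Proof.
move=> /andP[im mi] /andP[jm mj].
have ij : i < j + 1 by rewrite -block_start_lt (le_lt_trans im).
have ji : j < i + 1 by rewrite -block_start_lt (le_lt_trans jm).
lia.
Qed.

End BlockStarts.

Section Blocks.
Variables (A B : Type) (sigma : A -> seq B) (x : int -> A).

Local Notation pos := (block_start sigma x).

Definition blocks (z : int -> B) : Prop :=
  forall i, segment z (pos i) (pos (i + 1)) = sigma (x i).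

Lemma exists_blocks (d : B) : non_erasing sigma -> exists z, blocks z.
Proof.
move=> ne; pose blk m := xchoose (block_cover x ne m).
exists (fun m => nth d (sigma (x (blk m))) (absz (m - pos (blk m)))) => i.
apply: (@eq_from_nth _ d); rewrite size_segment (block_startS sigma x); first by lia.
move=> k; rewrite addrAC subrr add0r => ki; rewrite nth_segment; last by lia.
have ik : pos i <= pos i + k%:Z < pos (i + 1) by rewrite (block_startS sigma x); lia.
rewrite /blk (block_cover_uniq ne (xchooseP (block_cover x ne _)) ik).
by congr nth; lia.
Qed.

Variable z : int -> B.

Lemma sigma_biE : sigma_bi sigma x z <-> forall n : nat,
  segment z (pos (- n%:Z)) (pos n%:Z) = morph sigma (segment x (- n%:Z) n%:Z).
Proof.
have ln n : - n%:Z <= n%:Z by lia.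
have ex0 n : window x (- n%:Z) n = segment x (- n%:Z) 0 by rewrite -segment_window addNr.
have exn n : window x (- n%:Z) (n + n) = segment x (- n%:Z) n.
  by rewrite -segment_window PoszD addKr.
have ez n : window z (- (size (morph sigma (segment x (- n%:Z) 0)))%:Z)
                   (size (morph sigma (segment x (- n%:Z) n%:Z)))
            = segment z (pos (- n%:Z)) (pos n%:Z).
  rewrite -block_start_le0 ?oppr_le0 //.
  by rewrite (block_start_segment sigma x (ln n)) segment_window.
by split=> h n; move: (h n); rewrite ex0 exn ez.
Qed.

Lemma blocks_of_sigma_bi : sigma_bi sigma x z -> blocks z.
Proof.
move=> /sigma_biE bi i; pose n := (absz i).+1.
have ni : - n%:Z <= i by lia.
have in1 : i + 1 <= n%:Z by lia.
have ii1 : i <= i + 1 by rewrite lerDl.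
have pni := block_start_le sigma x ni; have pii1 := block_start_le sigma x ii1.
have pin1 := block_start_le sigma x in1.
move: (bi n); rewrite (segment_cat _ ni) ?(le_trans ii1) // (segment_cat _ ii1) // segment1.
rewrite (segment_cat _ pni (le_trans pii1 pin1)) (segment_cat _ pii1 pin1) !morph_cat morph1.
case/cat_size_inj; first by rewrite size_segment (block_start_segment sigma x ni); lia.
by move=> _ /cat_size_inj[] //; rewrite size_segment (block_startS sigma x); lia.
Qed.

Hypothesis bz : blocks z.

Lemma blocks_segment i j :
  i <= j -> segment z (pos i) (pos j) = morph sigma (segment x i j).
Proof.
move=> ij; have [n ->] : exists n : nat, j = i + n%:Z by exists (absz (j - i)); lia.
elim: n => [|n IHn]; first by rewrite addr0 /segment !subrr.
have le_in : i <= i + n%:Z by rewrite lerDl.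
rewrite -addn1 PoszD addrA (segment_cat _ le_in) ?lerDl //.
rewrite (segment_cat _ (block_start_le sigma x le_in)) ?(block_start_le sigma x) ?lerDl //.
by rewrite IHn bz segment1 morph_cat morph1.
Qed.

Lemma nonprefix_within_block c q r : pos c < q -> q <= r -> r <= pos (c + 1) ->
  nonprefix_factor (segment z q r) (sigma (x c)).
Proof.
move=> cq qr rc; exists (segment z (pos c) q), (segment z r (pos (c + 1))).
split; first exact: segment_nil.
by rewrite -bz (segment_cat z (ltW cq) (le_trans qr rc)) (segment_cat z qr rc).
Qed.

Lemma left_neighbor i q : pos (i - 1) < q <= pos i ->
  exists t, sigma (x (i - 1)) = t ++ z (q - 1) :: segment z q (pos i).
Proof.
move=> /andP[iq qi]; exists (segment z (pos (i - 1)) (q - 1)).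
have := bz (i - 1); rewrite subrK => <-.
rewrite (@segment_cat _ z _ (q - 1)); [|lia|lia].
by rewrite (@segment_cons _ z (q - 1)) ?subrK //; lia.
Qed.

Lemma sigma_bi_of_blocks : sigma_bi sigma x z.
Proof. by apply/sigma_biE => n; rewrite blocks_segment //; lia. Qed.

End Blocks.

Section FirstLetter.
Variables (A B : eqType) (sigma : A -> seq B) (l : B).
Hypothesis slp : strongly_left_proper sigma l.

Lemma slp_cons a : exists2 t, sigma a = l :: t & l \notin t.
Proof.
by have [[t ->]] := slp a; rewrite /= eqxx add1n => -[/count_memPn]; exists t.
Qed.

Lemma slp_proper_suffix a t s : sigma a = t ++ s -> t <> [::] -> l \notin s.
Proof.
have [t' -> lt'] := slp_cons a; case: t => [//|c t] [_ e] _.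
by apply: contra lt' => ls; rewrite e mem_cat ls orbT.
Qed.

Lemma slp_nonempty_prefix b p r : sigma b = p ++ r -> p <> [::] ->
  exists2 p', p = l :: p' & l \notin p'.
Proof.
have [t' -> lt'] := slp_cons b; case: p => [//|c p] [<- e] _.
by exists p => //; apply: contra lt' => lp; rewrite e mem_cat lp.
Qed.

Lemma slp_morph_cons v t : exists w, morph sigma v ++ l :: t = l :: w.
Proof.
case: v => [|a v]; first by exists t.
have [t' ht _] := slp_cons a; exists (t' ++ morph sigma v ++ l :: t).
by rewrite -cat1s morph_cat morph1 ht -catA.
Qed.

Variables (x : int -> A) (z : int -> B).
Hypotheses (ne : non_erasing sigma) (bz : blocks sigma x z).

Local Notation pos := (block_start sigma x).

Lemma blocks_head i : z (pos i) = l /\ l \notin segment z (pos i + 1) (pos (i + 1)).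
Proof.
have lt_i : pos i < pos (i + 1) by rewrite block_start_lt // ltrDl.
have [t ht lt] := slp_cons (x i).
by move: (bz i); rewrite (segment_cons _ lt_i) ht => -[-> ->].
Qed.

Lemma blocks_l_start m : z m = l -> exists i, m = pos i.
Proof.
move=> zm; have [i /andP[im mi]] := block_cover x ne m.
exists i; apply/eqP; rewrite eq_le im andbT leNgt; apply/negP => im'.
have := (blocks_head i).2; rewrite -zm mem_segment //; lia.
Qed.

Lemma notin_l_within_block q r : q < r -> l \notin segment z q r ->
  exists c, pos c < q /\ r <= pos (c + 1).
Proof.
move=> qr lu; have [c /andP[cq qc]] := block_cover x ne q.
exists c; split.
  rewrite lt_neqAle cq andbT; apply: contraNneq lu => cq'.
  by rewrite -(blocks_head c).1 cq' mem_segment // lexx qr.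
rewrite leNgt; apply: contra lu => cr.
by rewrite -(blocks_head (c + 1)).1 mem_segment // (ltW qc) cr.
Qed.

Lemma mem_l_across_blocks q r : q <= r -> l \in segment z q r ->
  exists i i', [/\ i <= i', pos (i - 1) < q <= pos i & pos i' < r <= pos (i' + 1)].
Proof.
move=> qr /(segmentP qr) [m /andP[qm mr] /blocks_l_start [j mj]].
have [c cq] := block_cover_lt x ne q.
have [i' ir] := block_cover_lt x ne r.
have cj : c < j by rewrite -(block_start_lt x ne) -mj; lia.
have ji : j < i' + 1 by rewrite -(block_start_lt x ne) -mj; lia.
by exists (c + 1), i'; rewrite addrK; split=> //; lia.
Qed.

Lemma right_neighbor i q : pos i < q <= pos (i + 1) ->
  exists t, sigma (x i) ++ [:: l] = segment z (pos i) q ++ z q :: t.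
Proof.
move=> /andP[iq qi]; exists (segment z (q + 1) (pos (i + 1) + 1)).
have pii1 : pos i <= pos (i + 1) by rewrite block_start_le ?lerDl.
rewrite -bz -(blocks_head (i + 1)).1 -segment1 -segment_cat ?lerDl //.
by rewrite (segment_cat z (ltW iq)) ?(segment_cons z (a := q)) //; lia.
Qed.

End FirstLetter.

Lemma eq_cat_cons_first (T : eqType) (c : T) s s' w w' :
  c \notin s -> c \notin s' -> s ++ c :: w = s' ++ c :: w' -> s = s' /\ w = w'.
Proof.
have idx t u : c \notin t -> index c (t ++ c :: u) = size t.
  by move=> ct; rewrite index_cat (negbTE ct) /= eqxx addn0.
move=> cs cs' e; have [|-> [->]] // := cat_size_inj _ e.
by rewrite -(idx s w) // e idx.
Qed.

Lemma eq_cat_cons_last (T : eqType) (c : T) s s' w w' :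
  c \notin w -> c \notin w' -> s ++ c :: w = s' ++ c :: w' -> s = s' /\ w = w'.
Proof.
have revE t u : rev (t ++ c :: u) = rev u ++ c :: rev t.
  by rewrite rev_cat rev_cons cat_rcons.
move=> cw cw' /(congr1 rev); rewrite !revE => /eq_cat_cons_first.
by rewrite !mem_rev => /(_ cw cw') [/(can_inj (@revK _))-> /(can_inj (@revK _))->].
Qed.

Definition interpretation (A B : Type) (X : (int -> A) -> Prop) (sigma : A -> seq B)
  (u s : seq B) (v : seq A) (p : seq B) (a b : A) : Prop :=
  [/\ ext_set X v a b, u = s ++ morph sigma v ++ p,
      (exists t, t <> [::] /\ sigma a = t ++ s) &
      (p <> [::] /\ exists r, sigma b = p ++ r)].

Section Languages.
Variables (A : Type) (X : (int -> A) -> Prop).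

Lemma lang_segment x i j : X x -> lang X (segment x i j).
Proof. by move=> Xx; right; exists x; split=> //; exists i; rewrite size_segment. Qed.

Lemma lang_infix s w t : lang X (s ++ w ++ t) -> lang X w.
Proof.
case: w => [|c w]; first by left.
case=> [|[x [Xx [i]]]]; first by case: s.
rewrite !size_cat !windowD => /(cat_size_inj (size_window _ _ _)) [_].
move/(cat_size_inj (size_window _ _ _)) => [wx _].
by right; exists x; split=> //; exists (i + (size s)%:Z).
Qed.

Variables (B : Type) (sigma : A -> seq B).

Local Notation Y := (image_shift X sigma).

Lemma interpretation_triple u s v p a b :
  interpretation X sigma u s v p a b -> triple_prop X sigma u s v p.
Proof.
move=> I; split; last by exists a, b.
by case: I => ab _ _ _; apply: (@lang_infix [:: a] v [:: b]).
Qed.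

Lemma lang_image_inv w : w <> [::] -> lang Y w ->
  exists x z q, [/\ X x, blocks sigma x z & window z q (size w) = w].
Proof.
move=> w0 [//|[y [[x [z [k [Xx bi _ yz]]]] [i wi]]]].
exists x, z, (i + k%:Z); split=> //; first exact: blocks_of_sigma_bi.
by rewrite -[RHS]wi; apply: eq_map => j /=; rewrite yz addrAC.
Qed.

Lemma lang_image_segment x z a b : non_erasing sigma -> X x -> blocks sigma x z ->
  lang Y (segment z a b).
Proof.
move=> ne Xx bz; right; exists z; split; last by exists a; rewrite size_segment.
exists x, z, 0%N; split=> //; first exact: sigma_bi_of_blocks.
  by case: (sigma (x 0)) (@ne (x 0)).
by move=> i; rewrite addr0.
Qed.

End Languages.

Section Interpretation.
Variables (A B : eqType) (X : (int -> A) -> Prop) (sigma : A -> seq B) (l : B).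
Hypotheses (ne : non_erasing sigma) (slp : strongly_left_proper sigma l).

Local Notation Y := (image_shift X sigma).

Section Positions.
Variables (x : int -> A) (z : int -> B).
Hypotheses (Xx : X x) (bz : blocks sigma x z).

Local Notation pos := (block_start sigma x).

Lemma interpretation_across_blocks i i' q r : i <= i' ->
  pos (i - 1) < q <= pos i -> pos i' < r <= pos (i' + 1) ->
  interpretation X sigma (segment z q r) (segment z q (pos i)) (segment x i i')
    (segment z (pos i') r) (x (i - 1)) (x i').
Proof.
move=> ii' /andP[iq qi] /andP[ir ri].
have pii' : pos i <= pos i' := block_start_le sigma x ii'.
split.
- rewrite /ext_set (_ : _ :: _ = segment x (i - 1) (i' + 1)); first exact: lang_segment.
  rewrite (@segment_cons _ x (i - 1)); last by lia.
  by rewrite subrK (@segment_cat _ x i i' (i' + 1)) ?lerDl // segment1.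
- have ipr : pos i' <= r := ltW ir.
  by rewrite (segment_cat z qi (le_trans pii' ipr)) (segment_cat z pii' ipr) blocks_segment.
- exists (segment z (pos (i - 1)) q); split; first exact: segment_nil.
  by have := bz (i - 1); rewrite subrK => <-; apply: segment_cat => //; apply: ltW.
- split; first exact: segment_nil.
  by exists (segment z r (pos (i' + 1))); rewrite -bz; apply: segment_cat => //; apply: ltW.
Qed.

Lemma blocks_interpretation q r : q <= r -> l \in segment z q r ->
  exists s v p a b, [/\ interpretation X sigma (segment z q r) s v p a b,
    (exists t, sigma a = t ++ z (q - 1) :: s) &
    (exists t, sigma b ++ [:: l] = p ++ z r :: t)].
Proof.
move=> qr /(mem_l_across_blocks slp ne bz qr) [i [i' [ii' iq ir]]].
exists (segment z q (pos i)), (segment x i i'), (segment z (pos i') r).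
exists (x (i - 1)), (x i').
split; first exact: interpretation_across_blocks.
  exact: left_neighbor.
exact: right_neighbor.
Qed.

End Positions.

Lemma lang_image_morph w : w <> [::] -> lang X w -> lang Y (morph sigma w ++ [:: l]).
Proof.
move=> w0 [//|[x [Xx [i wi]]]].
have [z bz] := exists_blocks x l ne.
have ij : i <= i + (size w)%:Z by rewrite lerDl.
have [zl _] := blocks_head slp ne bz (i + (size w)%:Z).
rewrite -wi -segment_window -(blocks_segment bz ij) -zl -segment1 -segment_cat ?lerDl //.
  exact: lang_image_segment _ _ ne Xx bz.
exact: block_start_le.
Qed.

Lemma lang_image_notin_l u : u <> [::] -> lang Y u -> l \notin u ->
  exists b, nonprefix_factor u (sigma b).
Proof.
move=> u0 /(lang_image_inv u0) [x [z [q [_ bz wu]]]] lu.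
have qr : q < q + (size u)%:Z by rewrite ltrDl; case: u u0 {wu lu}.
rewrite -wu -segment_window in lu *.
have [c [cq rc]] := notin_l_within_block slp ne bz qr lu.
by exists (x c); apply: (nonprefix_within_block bz cq (ltW qr) rc).
Qed.

Lemma lang_image_interpretation u : lang Y u -> l \in u ->
  exists s v p a b, interpretation X sigma u s v p a b.
Proof.
move=> Lu lu; have u0 : u <> [::] by move: lu => /[swap] ->.
have [x [z [q [Xx bz wu]]]] := lang_image_inv u0 Lu.
have qr : q <= q + (size u)%:Z by rewrite lerDl.
rewrite -wu -segment_window in lu.
have [s [v [p [a [b [I _ _]]]]]] := blocks_interpretation Xx bz qr lu.
by exists s, v, p, a, b; rewrite segment_window wu in I.
Qed.

Lemma ext_image_interpretation u a' b' : l \in u -> ext_set Y u a' b' ->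
  exists s v p a b, [/\ interpretation X sigma u s v p a b,
    (exists t, sigma a = t ++ a' :: s) & (exists t, sigma b ++ [:: l] = p ++ b' :: t)].
Proof.
move=> lu /lang_image_inv [] // x [z [q [Xx bz]]].
rewrite /= size_cat addn1 windowS -addn1 windowD window1 => -[<-].
move/(cat_size_inj (size_window _ _ _)) => [wu [<-]].
have qr : q + 1 <= q + 1 + (size u)%:Z by rewrite lerDl.
rewrite -wu -segment_window in lu.
have [s [v [p [a [b [I ta tb]]]]]] := blocks_interpretation Xx bz qr lu.
by exists s, v, p, a, b; rewrite segment_window wu addrK in I ta.
Qed.

Lemma ext_image_of_interpretation u s v p a b a' b' t t' :
  ext_set X v a b -> u = s ++ morph sigma v ++ p ->
  sigma a = t ++ a' :: s -> sigma b ++ [:: l] = p ++ b' :: t' -> ext_set Y u a' b'.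
Proof.
move=> ab -> ta tb; apply: (@lang_infix _ _ t _ t').
suff -> : t ++ (a' :: (s ++ morph sigma v ++ p) ++ [:: b']) ++ t' =
          morph sigma (a :: v ++ [:: b]) ++ [:: l] by exact: lang_image_morph.
by rewrite -(cat1s a) !morph_cat !morph1 -!catA tb ta /= -!catA.
Qed.

Lemma triple_prop_uniq u s v p s' v' p' : injective (morph sigma) ->
  triple_prop X sigma u s v p -> triple_prop X sigma u s' v' p' -> (s', v', p') = (s, v, p).
Proof.
move=> inj [_ [a [b [_ us [t [t0 ta]] [p0 [r br]]]]]]
           [_ [a' [b' [_ us' [t' [t0' ta']] [p0' [r' br']]]]]].
(* s is the part of u before its first l, and p1 the part after its last l. *)
have [p1 ep lp1] := slp_nonempty_prefix slp br p0.
have [p1' ep' lp1'] := slp_nonempty_prefix slp br' p0'.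
have [w vw] := slp_morph_cons slp v p1.
have [w' vw'] := slp_morph_cons slp v' p1'.
have [ss' _] : s = s' /\ w = w'.
  apply: (@eq_cat_cons_first _ l); last by rewrite -vw -vw' -ep -ep' -us -us'.
    exact: slp_proper_suffix ta t0.
  exact: slp_proper_suffix ta' t0'.
subst s'; have vp : morph sigma v ++ l :: p1 = morph sigma v' ++ l :: p1'.
  move: (congr1 (drop (size s)) (etrans (esym us) us')).
  by rewrite !drop_size_cat -?ep -?ep'.
by have [/inj-> pp] := eq_cat_cons_last lp1 lp1' vp; rewrite ep ep' pp.
Qed.

End Interpretation.

Theorem proposition4p1 (A B : finType) (X : (int -> A) -> Prop)
  (sigma : A -> seq B) (l : B) :
  shift_space X ->
  non_erasing sigma ->
  injective (morph sigma) ->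
  strongly_left_proper sigma l ->
  forall u : seq B, u <> [::] -> lang (image_shift X sigma) u ->
  (l \notin u -> exists b : A, nonprefix_factor u (sigma b)) /\
  (l \in u ->
     exists (s : seq B) (v : seq A) (p : seq B),
       [/\ triple_prop X sigma u s v p,
           (forall s' v' p', triple_prop X sigma u s' v' p' ->
              (s', v', p') = (s, v, p)) &
           (forall a' b' : B,
              ext_set (image_shift X sigma) u a' b' <->
              exists a b : A, [/\ ext_set X v a b,
                 (exists t, sigma a = t ++ a' :: s) &
                 (exists r, sigma b ++ [:: l] = p ++ b' :: r)])]).
Proof.
move=> _ ne inj slp u u0 Lu; split=> [nl|lu].
  exact: (lang_image_notin_l ne slp u0 Lu nl).
have [s [v [p [a [b I]]]]] := lang_image_interpretation ne slp Lu lu.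
have T := interpretation_triple I.
exists s, v, p; split=> [//|s' v' p' T'|a' b'].
  exact (triple_prop_uniq slp inj T T').
split=> [/(ext_image_interpretation ne slp lu) [s' [v' [p' [a1 [b1 [I' ta tb]]]]]]|].
  case: (triple_prop_uniq slp inj T (interpretation_triple I')) => es ev ep.
  by rewrite {}es {}ev {}ep in I' ta tb; exists a1, b1; case: I'.
case=> [a1 [b1 [ab [t ta] [r tb]]]]; case: I => _ us _ _.
exact: ext_image_of_interpretation ab us ta tb.
Qed.
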